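(* Let $A$ be an algebra, $R$ a Rota–Baxter operator of weight zero on $A$, and $e$ a nonzero idempotent of $A$. Then $e\notin \mathrm{Im}(R^k)\cap\ker R$ for every $k\ge2$.
   Context: An algebra is a vector space with a bilinear (not necessarily associative) product. A linear operator $R$ on $A$ is a Rota–Baxter operator of weight $0$ if $R(x)R(y)=R(R(x)y+xR(y))$ for all $x,y\in A$. *)

From HB Require Import structures.
From mathcomp Require Import all_boot all_order all_algebra.
Set Implicit Arguments. Unset Strict Implicit. Unset Printing Implicit Defensive.
Import GRing.Theory.
Local Open Scope ring_scope.

(* A (not necessarily associative) algebra structure on a vector space V over
   a field F is given by a bilinear product [mul : V -> V -> V]. *)
Definition bilinear_prod (F : fieldType) (V : lmodType F) (mul : V -> V -> V) : Prop :=
  (forall a x y z, mul (a *: x + y) z = a *: mul x z + mul y z) /\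
  (forall a x y z, mul x (a *: y + z) = a *: mul x y + mul x z).

Definition rota_baxter0 (F : fieldType) (V : lmodType F) (mul : V -> V -> V)
  (R : V -> V) : Prop :=
  forall x y, mul (R x) (R y) = R (mul (R x) y + mul x (R y)).

Definition in_image_iter (V : Type) (R : V -> V) (k : nat) (v : V) : Prop :=
  exists x, iter k R x = v.

(* If [e = R (R z)] lies in [ker R], then applying the Rota-Baxter identity to
   the pairs [(e, z)] and [(z, e)] shows that [R] kills both [e R(z)] and
   [R(z) e]; applying it to [(R z, R z)] then gives
   [e e = R (e R(z) + R(z) e) = 0]. A nonzero idempotent is not square-zero. *)
From HB Require Import structures.
From mathcomp Require Import all_boot all_order all_algebra.
Import GRing.Theory.
Local Open Scope ring_scope.

Set Implicit Arguments. Unset Strict Implicit.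

Lemma in_image_iter_le (T : Type) (f : T -> T) (m n : nat) (v : T) :
  (m <= n)%N -> in_image_iter f n v -> in_image_iter f m v.
Proof.
move=> /subnK <- [x <-]; exists (iter (n - m) f x).
by rewrite addnC iterD.
Qed.

Section BilinearProduct.

Variables (F : fieldType) (V : lmodType F) (mul : V -> V -> V).
Hypothesis mul_bilinear : bilinear_prod mul.

Lemma bilinear_mul0v (w : V) : mul 0 w = 0.
Proof.
have := mul_bilinear.1 1 0 0 w; rewrite !scale1r !addr0.
by move/eqP; rewrite -{1}[mul 0 w]add0r (inj_eq (addIr _)) eq_sym => /eqP.
Qed.

Lemma bilinear_mulv0 (w : V) : mul w 0 = 0.
Proof.
have := mul_bilinear.2 1 w 0 0; rewrite !scale1r !addr0.
by move/eqP; rewrite -{1}[mul w 0]add0r (inj_eq (addIr _)) eq_sym => /eqP.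
Qed.

Variable R : {linear V -> V}.
Hypothesis R_rota_baxter : rota_baxter0 mul R.

Lemma rota_baxter0_ker_mulvR (a y : V) : R a = 0 -> R (mul a (R y)) = 0.
Proof.
by move=> Ra0; have := R_rota_baxter a y; rewrite Ra0 !bilinear_mul0v add0r.
Qed.

Lemma rota_baxter0_ker_mulRv (a y : V) : R a = 0 -> R (mul (R y) a) = 0.
Proof.
by move=> Ra0; have := R_rota_baxter y a; rewrite Ra0 !bilinear_mulv0 addr0.
Qed.

Lemma rota_baxter0_sqr_image2_ker (e : V) :
  in_image_iter R 2 e -> R e = 0 -> mul e e = 0.
Proof.
move=> [z /= ez] Re0.
rewrite -{1 2}ez R_rota_baxter ez linearD.
by rewrite rota_baxter0_ker_mulvR // rota_baxter0_ker_mulRv // addr0.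
Qed.

End BilinearProduct.

Theorem lemma13 (F : fieldType) (V : lmodType F) (mul : V -> V -> V)
  (R : {linear V -> V}) (e : V) (k : nat) :
  bilinear_prod mul -> rota_baxter0 mul R ->
  mul e e = e -> e != 0 -> (2 <= k)%N ->
  ~ (in_image_iter R k e /\ R e = 0).
Proof.
move=> mul_bilinear R_rota_baxter ee e_neq0 k_ge2 [e_im Re0].
have e_im2 := in_image_iter_le k_ge2 e_im.
move/eqP: e_neq0; apply.
by rewrite -ee (rota_baxter0_sqr_image2_ker mul_bilinear R_rota_baxter e_im2).
Qed.
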